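(* Let $X,Y$ be separable Banach spaces, $S:X\to X$ and $T:Y\to Y$ bounded invertible linear operators, and $\Pi:X\to Y$ a bounded linear surjection with $\Pi\circ S=T\circ\Pi$. Then: (1) if $S$ has the shadowing property, then $T$ has the shadowing property. If moreover $\Pi$ admits a strong bounded selector, then: (2) if $S$ is expansive, then $T$ is expansive; (3) if $S$ is uniformly expansive, then $T$ is uniformly expansive.
   Context: $\Pi$ admits a strong bounded selector if there is $L\ge1$ such that for every $y\in Y$ there exists $x\in\Pi^{-1}(y)$ with $\|S^n x\|\le L\|T^n y\|$ and $\|T^n y\|\le L\|S^nx\|$ for all $n\in\mathbb Z$. An invertible operator $T$ is expansive if for each $x$ with $\|x\|=1$ there is $n\in\mathbb Z$ with $\|T^nx\|\ge2$; uniformly expansive if there is $n\in\mathbb N$ such that every $z$ with $\|z\|=1$ satisfies $\|T^nz\|\ge2$ or $\|T^{-n}z\|\ge2$; it has the shadowing property if there is $K>0$ such that for every bounded sequence $(z_n)_{n\in\mathbb Z}$ there is a sequence $(y_n)_{n\in\mathbb Z}$ with $\sup_n\|y_n\|\le K\sup_n\|z_n\|$ and $y_{n+1}=Ty_n+z_n$ for all $n\in\mathbb Z$. *)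

From HB Require Import structures.
From mathcomp Require Import all_boot all_order all_algebra.
From mathcomp Require Import all_classical all_reals all_analysis.
Set Implicit Arguments. Unset Strict Implicit. Unset Printing Implicit Defensive.
Import Order.TTheory GRing.Theory Num.Theory.
Import numFieldNormedType.Exports.
Local Open Scope classical_set_scope.
Local Open Scope ring_scope.

Definition separable (T : topologicalType) : Prop :=
  exists D : set T, countable D /\ closure D = setT.

Definition zpow (V : Type) (f finv : V -> V) (n : int) : V -> V :=
  match n with
  | Posz k => iter k f
  | Negz k => iter k.+1 finv
  end.

Definition shadowing (R : realType) (V : normedModType R) (T : V -> V) : Prop :=
  exists K : R, 0 < K /\
    forall z : int -> V,
      has_ubound (range (fun n => `|z n|)) ->
      exists y : int -> V,
        has_ubound (range (fun n => `|y n|)) /\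
        sup (range (fun n => `|y n|)) <= K * sup (range (fun n => `|z n|)) /\
        (forall n : int, y (n + 1) = T (y n) + z n).

Definition expansive (R : realType) (V : normedModType R) (T Tinv : V -> V) : Prop :=
  forall x : V, `|x| = 1 -> exists n : int, 2 <= `|zpow T Tinv n x|.

Definition unif_expansive (R : realType) (V : normedModType R) (T Tinv : V -> V) : Prop :=
  exists n : nat, forall z : V, `|z| = 1 ->
    2 <= `|iter n T z| \/ 2 <= `|iter n Tinv z|.

Definition strong_bounded_selector (R : realType) (X Y : normedModType R)
    (S Sinv : X -> X) (T Tinv : Y -> Y) (Pi : X -> Y) : Prop :=
  exists L : R, 1 <= L /\
    forall y : Y, exists x : X, Pi x = y /\
      forall n : int,
        `|zpow S Sinv n x| <= L * `|zpow T Tinv n y| /\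
        `|zpow T Tinv n y| <= L * `|zpow S Sinv n x|.

(* (1) By the open mapping theorem, obtained from Baire's theorem and the usual
   iterative correction, every y has a preimage of norm at most C |y|.  Lifting
   a bounded perturbation of T through Pi, shadowing it for S and projecting the
   orbit back by Pi shadows the original perturbation, with constant |Pi| K C.
   (2), (3) Expansivity self-improves: applied to normalised iterates it shows
   that the orbit of every x eventually exceeds c |x| for any c (in the uniform
   case at a time independent of x).  For a unit y the selector gives x with
   |S^n x| <= L |T^n y| and 1 <= L |x|, so |T^n y| >= 2 as soon as
   |S^n x| >= 2 L^2 |x|. *)

From HB Require Import structures.
From mathcomp Require Import all_boot all_order all_algebra.
From mathcomp Require Import all_classical all_reals all_analysis.
Import Order.TTheory GRing.Theory Num.Theory.
Import numFieldNormedType.Exports.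
Local Open Scope classical_set_scope.
Local Open Scope ring_scope.
From mathcomp Require Import zify ring lra.



Set Implicit Arguments.
Unset Strict Implicit.
Unset Printing Implicit Defensive.

Section IntegerIterates.
Variables (V : Type) (f finv : V -> V).
Hypotheses (fK : cancel f finv) (finvK : cancel finv f).

Lemma zpowD1 (n : int) x : zpow f finv (n + 1) x = f (zpow f finv n x).
Proof.
case: n => [k|[|k]].
- by rewrite -PoszD addn1.
- by rewrite NegzE addNr /= finvK.
- have -> : Negz k.+1 + 1 = Negz k by rewrite !NegzE; lia.
  by rewrite /= finvK.
Qed.

Lemma zpowB1 (n : int) x : zpow f finv (n - 1) x = finv (zpow f finv n x).
Proof. by rewrite -[in RHS](subrK 1 n) zpowD1 fK. Qed.

Lemma zpowD (m n : int) x : zpow f finv (m + n) x = zpow f finv m (zpow f finv n x).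
Proof.
case: m => k; elim: k => [|k IHk].
- by rewrite add0r.
- have -> : Posz k.+1 + n = (Posz k + n) + 1 by lia.
  by rewrite zpowD1 IHk.
- have -> : Negz 0 + n = n - 1 by rewrite NegzE; lia.
  by rewrite zpowB1.
- have -> : Negz k.+1 + n = (Negz k + n) - 1 by rewrite !NegzE; lia.
  by rewrite zpowB1 IHk.
Qed.

Lemma zpowNnat (n : nat) x : zpow f finv (- n%:Z) x = iter n finv x.
Proof. by case: n => [|n] //=; rewrite -NegzE. Qed.

Lemma iter_can n : cancel (iter n f) (iter n finv).
Proof. by elim: n => [|n IHn] x //; rewrite iterSr iterS fK IHn. Qed.

End IntegerIterates.

Lemma exists_pow2_ge (R : archiRealDomainType) (c : R) : exists k : nat, c <= 2 ^+ k.
Proof.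
exists (Num.truncn `|c|).+1; apply: le_trans (ler_norm c) _.
apply/ltW/(lt_le_trans (truncnS_gt _)).
by rewrite -natrX ler_nat ltnW // ltn_expl.
Qed.

Section Growth.
Variables (R : realType) (V : normedModType R) (f finv : V -> V).
Hypotheses (fK : cancel f finv) (finvK : cancel finv f).
Hypotheses (f_scalable : scalable f) (finv_scalable : scalable finv).

Lemma iter_scalable (g : V -> V) n : scalable g -> scalable (iter n g).
Proof. by move=> g_scalable a; elim: n => [|n IHn] x //=; rewrite IHn g_scalable. Qed.

Lemma zpow_scalable n : scalable (zpow f finv n).
Proof. by case: n => k /=; apply: iter_scalable. Qed.

Lemma normr_scalable_normalize (g : V -> V) (u : V) : scalable g -> u != 0 ->
  `|g u| = `|u| * `|g (`|u|^-1 *: u)|.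
Proof.
move=> g_scalable u0; rewrite g_scalable normrZ normfV normr_id mulrA.
by rewrite divff ?mul1r // normr_eq0.
Qed.

Lemma expansive_doubling : expansive f finv ->
  forall u, exists n, 2 * `|u| <= `|zpow f finv n u|.
Proof.
move=> fexp u; have [->|u0] := eqVneq u 0; first by exists 0; rewrite normr0 mulr0.
have [n le2] := fexp _ (normfZV u0); exists n.
by rewrite (normr_scalable_normalize (zpow_scalable n) u0) mulrC ler_wpM2l.
Qed.

Lemma expansive_growth : expansive f finv ->
  forall u (c : R), exists n, c * `|u| <= `|zpow f finv n u|.
Proof.
move=> /expansive_doubling fdbl u c; have [k ck] := exists_pow2_ge c.
suff [n le_n] : exists n, 2 ^+ k * `|u| <= `|zpow f finv n u|.
  by exists n; apply: le_trans le_n; rewrite ler_wpM2r.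
elim: {ck} k => [|k [n le_n]]; first by exists 0; rewrite mul1r.
have [m le_m] := fdbl (zpow f finv n u); exists (m + n).
by rewrite zpowD // exprS -mulrA (le_trans _ le_m) // ler_pM2l.
Qed.

Lemma unif_expansive_doubling : unif_expansive f finv ->
  exists N, forall u, 2 * `|u| <= `|iter N f u| \/ 2 * `|u| <= `|iter N finv u|.
Proof.
move=> [N fexp]; exists N => u; have [->|u0] := eqVneq u 0.
  by left; rewrite normr0 mulr0.
rewrite (normr_scalable_normalize (iter_scalable N f_scalable) u0).
rewrite (normr_scalable_normalize (iter_scalable N finv_scalable) u0).
rewrite ![2 * _]mulrC.
by case: (fexp _ (normfZV u0)) => le2; [left|right]; rewrite ler_wpM2l.
Qed.

Lemma doubling_persists (A B : V -> V) : cancel A B ->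
  (forall u, 2 * `|u| <= `|A u| \/ 2 * `|u| <= `|B u|) ->
  forall w, 2 * `|w| <= `|A w| -> forall k, 2 ^+ k * `|w| <= `|iter k A w|.
Proof.
move=> AK dbl w w_dbl k.
have step v : 2 * `|v| <= `|A v| -> 2 * `|A v| <= `|A (A v)|.
  move=> v_dbl; have [->|Av0] := eqVneq (A v) 0; first by rewrite normr0 mulr0.
  have Av_gt0 : 0 < `|A v| by rewrite normr_gt0.
  (* the backward alternative at [A v] would give [4 |A v| <= 2 |v| <= |A v|] *)
  by case: (dbl (A v)) => //; rewrite AK => back; lra.
have inv j : 2 * `|iter j A w| <= `|A (iter j A w)| /\
    2 ^+ j * `|w| <= `|iter j A w|.
  elim: j => [|j [j_dbl j_growth]]; first by rewrite mul1r.
  split; first exact: step.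
  by rewrite exprS -mulrA (le_trans _ j_dbl) // ler_pM2l.
exact: (inv k).2.
Qed.

Lemma unif_expansive_growth : unif_expansive f finv -> forall c : R,
  exists m, forall u, c * `|u| <= `|iter m f u| \/ c * `|u| <= `|iter m finv u|.
Proof.
move=> /unif_expansive_doubling [N dbl] c; have [k ck] := exists_pow2_ge c.
have dbl' v : 2 * `|v| <= `|iter N finv v| \/ 2 * `|v| <= `|iter N f v|.
  by case: (dbl v); [right|left].
exists (k * N)%N => u; rewrite !iterM.
have c_le : c * `|u| <= 2 ^+ k * `|u| by rewrite ler_wpM2r.
case: (dbl u) => u_dbl; [left|right]; apply: le_trans c_le _.
- exact: doubling_persists (iter_can fK N) dbl u u_dbl k.
- exact: doubling_persists (iter_can finvK N) dbl' u u_dbl k.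
Qed.
End Growth.

Lemma strong_bounded_selector_expansion (R : realType) (X Y : normedModType R)
    (S Sinv : X -> X) (T Tinv : Y -> Y) (Pi : X -> Y) :
  strong_bounded_selector S Sinv T Tinv Pi ->
  exists c : R, forall y, `|y| = 1 -> exists x : X,
    forall n, c * `|x| <= `|zpow S Sinv n x| -> 2 <= `|zpow T Tinv n y|.
Proof.
move=> [L [L_ge1 sel]]; exists (2 * L ^+ 2) => y y1.
have [x [_ xy]] := sel y; exists x => n grow.
have Lx : 1 <= L * `|x| by have [_] := xy 0; rewrite /= y1.
have [Sx _] := xy n; have := normr_ge0 (zpow T Tinv n y).
rewrite expr2 in grow; nra.
Qed.

Section SelectorTransfer.
Variables (R : realType) (X Y : normedModType R).
Variables (S : {linear X -> X}) (Sinv : X -> X) (T Tinv : Y -> Y) (Pi : X -> Y).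
Hypotheses (SK : cancel S Sinv) (SinvK : cancel Sinv S).
Hypothesis selector : strong_bounded_selector S Sinv T Tinv Pi.

Lemma expansive_factor : expansive S Sinv -> expansive T Tinv.
Proof.
move=> Sexp y y1; have [c expand] := strong_bounded_selector_expansion selector.
have [x x_expand] := expand y y1.
have [n grow] := expansive_growth SK SinvK (linearZZ S) (can2_scalable SK SinvK) Sexp x c.
by exists n; apply: x_expand.
Qed.

Lemma unif_expansive_factor : unif_expansive S Sinv -> unif_expansive T Tinv.
Proof.
have [c expand] := strong_bounded_selector_expansion selector.
move=> /(unif_expansive_growth SK SinvK (linearZZ S) (can2_scalable SK SinvK)).
move=> /(_ c) [m grow]; exists m => y y1; have [x x_expand] := expand y y1.
case: (grow x) => Sx; [left|right].
- exact: (x_expand m).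
- by rewrite -(zpowNnat T); apply: x_expand; rewrite zpowNnat.
Qed.
End SelectorTransfer.

Section OpenMapping.
Variables (R : realType) (X Y : completeNormedModType R) (Pi : {linear X -> Y}).
Hypotheses (Pi_cont : continuous Pi) (Pi_surj : forall y, exists x, Pi x = y).

Lemma closure_image_ball_has_interior : exists (n : nat) (y0 : Y) (r : R), 0 < r /\
  ball y0 r `<=` closure (Pi @` [set x | `|x| <= n%:R]).
Proof.
apply: contrapT => no_interior.
pose F n := ~` closure (Pi @` [set x : X | `|x| <= n%:R]).
have F_open n : open (F n) by apply: closed_openC; exact: closed_closure.
have F_dense n : dense (F n).
  move=> O [y Oy] O_open; apply: contrapT => OF; apply: no_interior; exists n.
  have /nbhs_ballP [r r_gt0 rO] : nbhs y O by apply: open_nbhs_nbhs.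
  exists y, r; split => // z yz; apply: contrapT => Fz.
  by apply: OF; exists z; split => //; apply: rO.
have [|y [_ yF]] := Baire (fun n => conj (F_open n) (F_dense n)) _ (@openT Y).
  by exists 0.
have [x Pxy] := Pi_surj y.
apply: (yF (Num.truncn `|x|).+1 Logic.I); rewrite -Pxy; apply: subset_closure.
by exists x => //=; exact/ltW/truncnS_gt.
Qed.

Lemma image_ball_approx : exists (n : nat) (r : R), 0 < r /\
  forall v : Y, `|v| < r -> forall e, 0 < e -> exists x : X, `|x| <= n%:R /\ `|v - Pi x| < e.
Proof.
have [n [y0 [r [r_gt0 sub]]]] := closure_image_ball_has_interior.
exists (n + n)%N, r; split => // v v_lt e e_gt0.
have e2_gt0 : 0 < e / 2 by lra.
have approx y : ball y0 r y -> exists x : X, `|x| <= n%:R /\ `|y - Pi x| < e / 2.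
  move=> /sub y_cl; have [_ [[x x_le <-] yx]] := y_cl _ (nbhsx_ballx y _ e2_gt0).
  by exists x; split => //; move: yx; rewrite -ball_normE.
have [|x1 [x1_le d1]] := approx (y0 + v).
  by rewrite -ball_normE /ball_ /= opprD addrA subrr sub0r normrN.
have [x2 [x2_le d2]] := approx y0 (ballxx _ r_gt0).
exists (x1 - x2); split; first by rewrite natrD (le_trans (ler_normB _ _)) ?lerD.
have -> : v - Pi (x1 - x2) = (y0 + v - Pi x1) - (y0 - Pi x2).
  by rewrite linearB opprB [in RHS]opprB [RHS]addrC -[y0 + v - _]addrA subrKA addrCA.
by rewrite (le_lt_trans (ler_normB _ _)) //; lra.
Qed.

Lemma approx_lift : exists2 M : R, 0 < M & forall y : Y, exists x : X,
  `|x| <= M * `|y| /\ `|y - Pi x| <= `|y| / 2.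
Proof.
have [n [r [r_gt0 approx]]] := image_ball_approx.
exists (2 * n.+1%:R / r) => [|y]; first by rewrite divr_gt0 ?mulr_gt0.
have [->|y_neq0] := eqVneq y 0.
  by exists 0; rewrite linear0 subr0 !normr0 mulr0 mul0r.
have y_gt0 : 0 < `|y| by rewrite normr_gt0.
pose d := 2 * `|y| / r; have d_gt0 : 0 < d by rewrite divr_gt0 ?mulr_gt0.
have r4_gt0 : 0 < r / 4 by lra.
have [|x [x_le x_approx]] := approx (d^-1 *: y) _ _ r4_gt0.
  rewrite normrZ gtr0_norm ?invr_gt0 // /d invf_div.
  suff -> : r / (2 * `|y|) * `|y| = r / 2 by lra.
  by field; rewrite gt_eqF.
exists (d *: x); split.
  have -> : 2 * n.+1%:R / r * `|y| = d * n.+1%:R by rewrite /d; field; rewrite gt_eqF.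
  by rewrite normrZ gtr0_norm // ler_pM2l // (le_trans x_le) // ler_nat.
have -> : y - Pi (d *: x) = d *: (d^-1 *: y - Pi x).
  by rewrite linearZ scalerBr scalerA divff ?scale1r // gt_eqF.
have -> : `|y| / 2 = d * (r / 4) by rewrite /d; field; rewrite gt_eqF.
by rewrite normrZ gtr0_norm // ler_pM2l // ltW.
Qed.

Section IterativeLift.
Variables (g : Y -> X) (M : R).
Hypotheses (M_ge0 : 0 <= M) (g_le : forall y, `|g y| <= M * `|y|).
Hypothesis g_approx : forall y, `|y - Pi (g y)| <= `|y| / 2.
Variable y : Y.

Let residual k := iter k (fun v => v - Pi (g v)) y.
Let correction k := g (residual k).

Lemma residual_le k : `|residual k| <= geometric `|y| 2^-1 k.
Proof.
elim: k => [|k IHk] /=; first by rewrite mulr1.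
by rewrite exprS mulrCA (le_trans (g_approx _)) // mulrC ler_pM2l.
Qed.

Lemma correction_le k : `|correction k| <= geometric (M * `|y|) 2^-1 k.
Proof. by rewrite /= -mulrA (le_trans (g_le _)) // ler_wpM2l // residual_le. Qed.

Let half_lt1 : `|2^-1 : R| < 1.
Proof. by rewrite ger0_norm ?invr_ge0 // invf_lt1 // ltr1n. Qed.

Lemma cvg_normed_correction : cvgn [normed series correction].
Proof.
apply: (series_le_cvg _ _ correction_le (is_cvg_geometric_series half_lt1)) => k //=.
by rewrite !mulr_ge0 // exprn_ge0 // invr_ge0.
Qed.

Lemma image_correction_sum n : Pi (series correction n) = y - residual n.
Proof.
elim: n => [|n IHn]; first by rewrite /series /= big_geq // linear0 subrr.
by rewrite seriesSr linearD IHn /= opprB addrA addrAC.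
Qed.

Lemma iterative_lift : exists x : X, Pi x = y /\ `|x| <= 2 * M * `|y|.
Proof.
have cvg_sum := normed_cvg cvg_normed_correction.
exists (limn (series correction)); split.
  have Pi_sum : (Pi \o series correction) @ \oo --> Pi (limn (series correction)).
    by apply: continuous_cvg; [exact: Pi_cont | exact: cvg_sum].
  have Pi_sum_y : (Pi \o series correction) @ \oo --> y.
    rewrite (_ : Pi \o _ = fun n => y - residual n); last exact/funext/image_correction_sum.
    rewrite -[y in _ --> y]subr0; apply: cvgB; first exact: cvg_cst.
    apply: norm_cvg0; apply: (squeeze_cvgr _ (cvg_cst 0) (cvg_geometric `|y| half_lt1)).
    by apply: nearW => n /=; rewrite normr_ge0 residual_le.
  exact: cvg_unique Pi_sum Pi_sum_y.
apply: le_trans (lim_series_norm cvg_normed_correction) _.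
have -> : 2 * M * `|y| = limn (series (geometric (M * `|y|) 2^-1)).
  apply/esym/cvg_lim => //; rewrite (_ : 2 * M * _ = M * `|y| / (1 - 2^-1)).
    exact: cvg_geometric_series.
  by field.
apply: ler_lim cvg_normed_correction (is_cvg_geometric_series half_lt1) _.
by apply: nearW => n; apply: ler_sum => k _; exact: correction_le.
Qed.

End IterativeLift.

Lemma bounded_lift : exists2 C : R, 0 < C & forall y : Y, exists x : X,
  Pi x = y /\ `|x| <= C * `|y|.
Proof.
have [M M_gt0 approx] := approx_lift; have [g g_approx] := choice approx.
exists (2 * M) => [|y]; first by rewrite mulr_gt0.
exact: (@iterative_lift g M (ltW M_gt0)
  (fun z => (g_approx z).1) (fun z => (g_approx z).2)).
Qed.

End OpenMapping.

Lemma continuous_linear_norm_le (R : realType) (U V : normedModType R) (f : {linear U -> V}) :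
  continuous f -> exists2 P : R, 0 < P & forall u, `|f u| <= P * `|u|.
Proof.
move=> /(linear_bounded_continuous f).2 /linear_boundedP [M [_ M_le]].
exists (`|M| + 1); first by rewrite ltr_wpDl.
by apply: M_le; rewrite (le_lt_trans (ler_norm M)) // ltrDl.
Qed.

Section SupRange.
Variables (R : realType) (a : int -> R).

Lemma sup_range_le B : (forall n, a n <= B) -> sup (range a) <= B.
Proof. by move=> aB; apply: ge_sup; [exists (a 0), 0 | move=> _ [n _ <-]]. Qed.

Lemma le_sup_range : has_ubound (range a) -> forall n, a n <= sup (range a).
Proof. by move=> a_bd n; apply: ub_le_sup => //; exists n. Qed.

End SupRange.

Lemma shadowing_factor (R : realType) (X Y : completeNormedModType R)
    (S : X -> X) (T : Y -> Y) (Pi : {linear X -> Y}) :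
  continuous Pi -> (forall y, exists x, Pi x = y) ->
  (forall x, Pi (S x) = T (Pi x)) -> shadowing S -> shadowing T.
Proof.
move=> Pi_cont Pi_surj comm [K [K_gt0 S_shadow]].
have [C C_gt0 lift] := bounded_lift Pi_cont Pi_surj.
have [P P_gt0 Pi_le] := continuous_linear_norm_le Pi_cont.
have [g g_lift] := choice lift.
exists (P * K * C); split; first by rewrite !mulr_gt0.
move=> z z_bd; set Z := sup (range (fun n => `|z n|)).
pose w n := g (z n).
have w_le n : `|w n| <= C * Z.
  by rewrite (le_trans (g_lift _).2) // ler_pM2l //; apply: le_sup_range.
have w_bd : has_ubound (range (fun n => `|w n|)) by exists (C * Z) => _ [n _ <-].
have [u [u_bd [u_sup u_orbit]]] := S_shadow w w_bd.
have u_le n : `|u n| <= K * (C * Z).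
  rewrite (le_trans (le_sup_range u_bd n)) // (le_trans u_sup) //.
  by rewrite ler_pM2l //; apply: sup_range_le.
have Pu_le n : `|Pi (u n)| <= P * K * C * Z.
  by rewrite (le_trans (Pi_le _)) // -!mulrA ler_pM2l.
exists (Pi \o u); split; [|split].
- by exists (P * K * C * Z) => _ [n _ <-]; apply: Pu_le.
- exact: sup_range_le.
- by move=> n /=; rewrite u_orbit linearD comm (g_lift _).1.
Qed.

Theorem lemma3p2 (R : realType) (X Y : completeNormedModType R)
  (S : {linear X -> X}) (Sinv : X -> X) (T : {linear Y -> Y}) (Tinv : Y -> Y)
  (Pi : {linear X -> Y})
  (hX : separable X) (hY : separable Y)
  (hS : continuous S) (hSinv : continuous Sinv)
  (hSK : cancel S Sinv) (hSK' : cancel Sinv S)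
  (hT : continuous T) (hTinv : continuous Tinv)
  (hTK : cancel T Tinv) (hTK' : cancel Tinv T)
  (hPi : continuous Pi) (hPisurj : forall y : Y, exists x : X, Pi x = y)
  (hcomm : forall x : X, Pi (S x) = T (Pi x)) :
  (shadowing S -> shadowing T) /\
  (strong_bounded_selector S Sinv T Tinv Pi ->
     (expansive S Sinv -> expansive T Tinv) /\
     (unif_expansive S Sinv -> unif_expansive T Tinv)).
Proof.
split; first exact: shadowing_factor hPi hPisurj hcomm.
move=> sel; split; [exact: expansive_factor hSK hSK' sel|].
exact: unif_expansive_factor hSK hSK' sel.
Qed.
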